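(* Let $p\ge 2$ and $\varphi\in\mathbb{C}^{p-1}\setminus\Omega$. Then $\dim Z^2_{1}(F_\varphi,F_\varphi)=2(p-1)$; a basis is given by the cochains $\psi^1_{2,j}$ ($3\le j\le 2p$) defined by $\psi^1_{2,j}(X_2,X_j)=X_1$ and zero on all other basis pairs (up to antisymmetry).
   Context: Let $p\ge 2$ and $\varphi=(\varphi_1,\dots,\varphi_{p-1})\in\mathbb{C}^{p-1}$. $F_\varphi$ denotes the $2p$-dimensional complex Lie algebra with basis $X_1,\dots,X_{2p}$ whose nonzero brackets (up to antisymmetry) are $[X_1,X_2]=X_1$, $[X_2,X_{2k+1}]=\varphi_kX_{2k+1}$, $[X_2,X_{2k+2}]=-(1+\varphi_k)X_{2k+2}$, $[X_{2k+1},X_{2k+2}]=X_1$ for $1\le k\le p-1$. It is graded by $(F_\varphi)_0=\mathbb{C}X_2$, $(F_\varphi)_1=\operatorname{span}\{X_3,\dots,X_{2p}\}$, $(F_\varphi)_2=\mathbb{C}X_1$. A $2$-cochain $\psi$ is homogeneous of degree $k$ if $\psi((F_\varphi)_i,(F_\varphi)_j)\subset(F_\varphi)_{i+j+k}$; $Z^2_k(F_\varphi,F_\varphi)$ denotes the space of homogeneous degree-$k$ $2$-cocycles of the Chevalley–Eilenberg complex with adjoint coefficients. $\Omega=\Omega_1\cup\Omega_2\subset\mathbb{C}^{p-1}$, where $\Omega_1$ is the union of the hyperplanes $\{1+\varphi_i+\varphi_j=0\}$, $\{2+\varphi_i+\varphi_j=0\}$ ($1\le i,j\le p-1$), $\{\varphi_i-\varphi_j=0\}$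 ($i\ne j$), $\{\varphi_i=0\}$, $\{\varphi_i+1=0\}$, $\{2\varphi_i+1=0\}$, and $\Omega_2$ is the union of $\{1+\varphi_i-\varphi_j=0\}$, $\{\varphi_i+\varphi_j=0\}$, $\{2+\varphi_i=0\}$, $\{1-\varphi_i=0\}$, $\{1+2\varphi_i-\varphi_j=0\}$, $\{1+2\varphi_i+\varphi_j=0\}$, $\{2\varphi_i-\varphi_j=0\}$, $\{2+2\varphi_i+\varphi_j=0\}$ ($1\le i,j\le p-1$). *)

From HB Require Import structures.
From mathcomp Require Import all_boot all_order all_algebra.
From mathcomp Require Import complex.
From mathcomp Require Import reals.
Set Implicit Arguments. Unset Strict Implicit. Unset Printing Implicit Defensive.
Import Order.TTheory GRing.Theory Num.Theory.
Local Open Scope ring_scope.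

Section Fphi.
Variable (R : realType).
Local Notation C := (R[i]).

(* Basis X_1,...,X_{2p} is indexed 0-based by 'I_(2p): X_{a+1} <-> index a. *)

Definition ev (n : nat) (a : nat) : 'rV[C]_n := \row_(m < n) (if val m == a then 1 else 0).

(* phi_k for k in 1..p-1 (1-based, as in the paper); 0 outside the range *)
Definition phik (m : nat) (phi : 'I_m -> C) (k : nat) : C :=
  match insub k.-1 with Some i => phi i | None => 0 end.

(* Lie bracket of basis elements [X_{a+1}, X_{b+1}] of F_phi (n = 2p) *)
Definition brb (p : nat) (phi : 'I_p.-1 -> C) (a b : nat) : 'rV[C]_(2 * p) :=
  let e := ev (2 * p) in
  if (a == 0%N) && (b == 1%N) then e 0%N
  else if (a == 1%N) && (b == 0%N) then - e 0%N
  else if (a == 1%N) && (2 <= b)%N then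
    (if ~~ odd b then phik phi b./2 *: e b else - (1 + phik phi b./2) *: e b)
  else if (2 <= a)%N && (b == 1%N) then
    - (if ~~ odd a then phik phi a./2 *: e a else - (1 + phik phi a./2) *: e a)
  else if (2 <= a)%N && (2 <= b)%N then
    (if ~~ odd a && (b == a.+1) then e 0%N
     else if ~~ odd b && (a == b.+1) then - e 0%N else 0)
  else 0.

Definition adL (p : nat) (phi : 'I_p.-1 -> C) (a : nat) (v : 'rV[C]_(2 * p))
  : 'rV[C]_(2 * p) := \sum_(j < 2 * p) v 0 j *: brb phi a j.

(* 2-cochains with adjoint coefficients: bilinear maps F x F -> F, given by their
   values on pairs of basis elements *)
Definition cochain (n : nat) := {ffun 'I_n * 'I_n -> 'rV[C]_n}.

Definition psiL (n : nat) (psi : cochain n) (v : 'rV[C]_n) (c : 'I_n) : 'rV[C]_n :=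
  \sum_(i < n) v 0 i *: psi (i, c).

Definition alternating (n : nat) (psi : cochain n) : Prop :=
  forall i j : 'I_n, psi (i, j) = - psi (j, i).

Definition cocycle (p : nat) (phi : 'I_p.-1 -> C) (psi : cochain (2 * p)) : Prop :=
  forall a b c : 'I_(2 * p),
    adL phi a (psi (b, c)) - adL phi b (psi (a, c)) + adL phi c (psi (a, b))
    - psiL psi (brb phi a b) c + psiL psi (brb phi a c) b - psiL psi (brb phi b c) a = 0.

Definition gdeg (a : nat) : int := if a == 0%N then 2 else if a == 1%N then 0 else 1.

Definition homogeneous (n : nat) (k : int) (psi : cochain n) : Prop :=
  forall i j l : 'I_n, gdeg l != gdeg i + gdeg j + k -> psi (i, j) 0 l = 0.

Definition Z2 (p : nat) (phi : 'I_p.-1 -> C) (k : int) (psi : cochain (2 * p)) : Prop :=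
  [/\ alternating psi, cocycle phi psi & homogeneous k psi].

(* psi^1_{2,j}: (X_2, X_j) |-> X_1, (X_j, X_2) |-> -X_1, zero elsewhere;
   here jj = j - 1 is the 0-based index of X_j *)
Definition psi2 (n : nat) (jj : 'I_n) : cochain n :=
  [ffun ij : 'I_n * 'I_n =>
     if (val ij.1 == 1%N) && (ij.2 == jj) then ev n 0
     else if (ij.1 == jj) && (val ij.2 == 1%N) then - ev n 0 else 0].

Definition psi2_family (n : nat) : seq (cochain n) :=
  [seq psi2 jj | jj <- enum 'I_n & (2 <= val jj)%N].

Definition Omega1 (m : nat) (phi : 'I_m -> C) : Prop :=
  exists i j : 'I_m,
    1 + phi i + phi j = 0 \/ 2 + phi i + phi j = 0 \/ (i != j /\ phi i - phi j = 0)
    \/ phi i = 0 \/ phi i + 1 = 0 \/ 2 * phi i + 1 = 0.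

Definition Omega2 (m : nat) (phi : 'I_m -> C) : Prop :=
  exists i j : 'I_m,
    1 + phi i - phi j = 0 \/ phi i + phi j = 0 \/ 2 + phi i = 0 \/ 1 - phi i = 0
    \/ 1 + 2 * phi i - phi j = 0 \/ 1 + 2 * phi i + phi j = 0
    \/ 2 * phi i - phi j = 0 \/ 2 + 2 * phi i + phi j = 0.

Definition Omega (m : nat) (phi : 'I_m -> C) : Prop := Omega1 phi \/ Omega2 phi.

End Fphi.

(* In degree 1 a cochain sends (X_i, X_j) into degree deg X_i + deg X_j + 1.
   Since X_1 is the only element of degree 2 and nothing has degree 3, the
   only possibly nonzero values are psi(X_2, X_j) = -psi(X_j, X_2) in C X_1
   for j >= 3: the psi^1_{2,j} span the alternating degree-1 cochains and are
   visibly independent.  Every such cochain is a cocycle: its values lie in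
   C X_1, which is killed by every ad X_j except ad X_2; psi vanishes on
   X_1 and hence on all brackets of degree-1 elements; and the terms that
   survive, all involving X_2 twice, cancel by antisymmetry. *)
From HB Require Import structures.
From mathcomp Require Import all_boot all_order all_algebra.
From mathcomp Require Import complex reals zify ring.
Set Implicit Arguments. Unset Strict Implicit. Unset Printing Implicit Defensive.
Import Order.TTheory GRing.Theory Num.Theory.
Local Open Scope ring_scope.

Section Degree1Cochains.
Variables (R : realType) (n : nat).
Hypothesis n_gt1 : (1 < n)%N.
Local Notation C := R[i].
Local Notation e1 := (ev R n 0).

Definition X1 : 'I_n := Ordinal (ltnW n_gt1).
Definition X2 : 'I_n := Ordinal n_gt1.

Definition deg1_alternating (psi : cochain R n) :=
  alternating psi /\ homogeneous 1 psi.

Lemma gdegE (a : nat) : gdeg a = if a == 0%N then 2 else if a == 1%N then 0 else 1.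
Proof. by []. Qed.

Section Shape.
Variable psi : cochain R n.
Hypotheses (psi_alt : alternating psi) (psi_hom : homogeneous 1 psi).

Definition psiX1 (x y : 'I_n) : C := psi (x, y) 0 X1.

Lemma psiX1_antisym x y : psiX1 x y = - psiX1 y x.
Proof. by rewrite /psiX1 psi_alt mxE. Qed.

Lemma psiX1_deg2 x y : val x != 1%N -> val y != 1%N -> psiX1 x y = 0.
Proof.
move=> /negbTE x_neq1 /negbTE y_neq1; apply: psi_hom.
by rewrite !gdegE /= x_neq1 y_neq1; repeat case: ifP.
Qed.

Lemma psiX1_X1l x y : val x = 0%N -> psiX1 x y = 0.
Proof. by move=> x0; apply: psi_hom; rewrite !gdegE /= x0; repeat case: ifP. Qed.

Lemma psiX1_X2X2 : psiX1 X2 X2 = 0.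
Proof. exact: psi_hom. Qed.

Lemma deg1_valueE x y : psi (x, y) = psiX1 x y *: e1.
Proof.
apply/rowP => l; rewrite !mxE.
have [l0|l_neq0] := eqVneq (val l) 0%N.
  by rewrite (_ : l = X1) ?mulr1 //; apply: val_inj.
rewrite mulr0.
have [/andP[/eqP x1 /eqP y1]|not_X2X2] := boolP ((val x == 1%N) && (val y == 1%N)).
  have -> : x = X2 by apply: val_inj.
  have -> : y = X2 by apply: val_inj.
  by apply/eqP; rewrite -eqNr {2}psi_alt mxE.
apply: psi_hom; rewrite !gdegE (negbTE l_neq0).
by move: not_X2X2; case: (val x == 1%N); case: (val y == 1%N) => //= _; repeat case: ifP.
Qed.

Lemma psiX1E x y :
  psiX1 x y = if (val x == 1%N) && (2 <= val y)%N then psiX1 X2 y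
              else if (2 <= val x)%N && (val y == 1%N) then - psiX1 X2 x else 0.
Proof.
have eqX2 z : val z = 1%N -> z = X2 by move=> z1; apply: val_inj.
have [x1|x_neq1] := eqVneq (val x) 1%N; have [y1|y_neq1] := eqVneq (val y) 1%N.
- by rewrite (eqX2 x x1) (eqX2 y y1) psiX1_X2X2.
- rewrite (eqX2 x x1) /=; case: (leqP 2 (val y)) => [//|y_lt2] /=.
  by rewrite psiX1_antisym psiX1_X1l ?oppr0 //; lia.
- rewrite (eqX2 y y1) andbT /=; case: (leqP 2 (val x)) => [_|x_lt2].
    exact: psiX1_antisym.
  by rewrite psiX1_X1l //; lia.
- by rewrite !andbF psiX1_deg2.
Qed.

End Shape.

Lemma deg1_alternating_lin (a : C) psi psi' :
  deg1_alternating psi -> deg1_alternating psi' -> deg1_alternating (a *: psi + psi').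
Proof.
move=> [alt hom] [alt' hom']; split=> [i j|i j l hl].
  by rewrite !ffunE alt alt' opprD scalerN.
by rewrite !ffunE !mxE hom // hom' // mulr0 addr0.
Qed.

Lemma deg1_alternating0 : deg1_alternating 0.
Proof. by split=> [i j|i j l _]; rewrite !ffunE ?mxE ?oppr0. Qed.

Lemma deg1_alternating_psi2 jj : (2 <= val jj)%N -> deg1_alternating (psi2 R jj).
Proof.
move=> jj_ge2; have jj_neq1 : val jj != 1%N by apply/eqP; lia.
have jj_neq0 : val jj != 0%N by apply/eqP; lia.
split=> [i j|i j l]; rewrite !ffunE /=.
  have [->|_] := eqVneq i jj; have [->|_] := eqVneq j jj;
    rewrite ?andbT ?andbF /= ?eqxx ?(negbTE jj_neq1) ?oppr0 //;
    by case: (_ == 1%N); rewrite ?opprK ?oppr0.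
case: ifP => [/andP[/eqP i1 /eqP ->]|_].
  move=> hl; rewrite mxE; case: (eqVneq (val l) 0%N) hl => [l0|//].
  by rewrite !gdegE i1 l0 (negbTE jj_neq0) (negbTE jj_neq1).
case: ifP => [/andP[/eqP -> /eqP j1]|_]; last by rewrite mxE.
move=> hl; rewrite !mxE; case: (eqVneq (val l) 0%N) hl => [l0|]; rewrite ?oppr0 //.
by rewrite !gdegE j1 l0 (negbTE jj_neq0) (negbTE jj_neq1).
Qed.

Lemma sum_psi2E (c : 'I_n -> C) x y :
  (\sum_(jj | (2 <= val jj)%N) c jj *: psi2 R jj) (x, y) =
  (if (val x == 1%N) && (2 <= val y)%N then c y
   else if (2 <= val x)%N && (val y == 1%N) then - c x else 0) *: e1.
Proof.
rewrite sum_ffunE; under eq_bigr do rewrite !ffunE /=.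
have neq_ge2 (z jj : 'I_n) : ~~ (2 <= val z)%N -> (2 <= val jj)%N -> (z == jj) = false.
  by move=> z_lt2 jj_ge2; apply: contraNF z_lt2 => /eqP->.
have [x1|x_neq1] := eqVneq (val x) 1%N.
  have x_lt2 : ~~ (2 <= val x)%N by rewrite x1.
  rewrite x1 /=; case: (boolP (2 <= val y)%N) => [y_ge2|y_lt2].
    rewrite (bigD1 y) //= eqxx big1 ?addr0 // => jj /andP[jj_ge2].
    by rewrite eq_sym => /negbTE->; rewrite neq_ge2 ?scaler0.
  by rewrite scale0r big1 // => jj jj_ge2; rewrite !neq_ge2 ?scaler0.
under eq_bigr do rewrite andFb.
case: (boolP (2 <= val x)%N) => [x_ge2|x_lt2] /=.
  case: ifP => [y1|_]; last by rewrite scale0r big1 // => jj _; rewrite andbF scaler0.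
  rewrite (bigD1 x) //= eqxx big1 ?addr0 ?scalerN ?scaleNr // => jj /andP[_].
  by rewrite eq_sym => /negbTE->; rewrite scaler0.
by rewrite scale0r big1 // => jj jj_ge2; rewrite neq_ge2 ?scaler0.
Qed.

Lemma deg1_expansion psi : deg1_alternating psi ->
  psi = \sum_(jj | (2 <= val jj)%N) psiX1 psi X2 jj *: psi2 R jj.
Proof.
by move=> [alt hom]; apply/ffunP => -[x y]; rewrite sum_psi2E deg1_valueE // psiX1E.
Qed.

Local Notation family := (psi2_family R n).
Local Notation indices := [seq jj <- enum 'I_n | (2 <= val jj)%N].

Lemma span_psi2P psi : reflect (deg1_alternating psi) (psi \in <<family>>%VS).
Proof.
apply: (iffP idP) => [|deg1]; last first.
  rewrite (deg1_expansion deg1); apply: rpred_sum => jj jj_ge2.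
  by apply/rpredZ/memv_span/mapP; exists jj; rewrite // mem_filter jj_ge2 mem_enum.
move=> /(@coord_span _ _ _ (in_tuple family)) ->.
apply: (big_ind deg1_alternating) => [|x y dx dy|i _]; first exact: deg1_alternating0.
  by rewrite -[x]scale1r; apply: deg1_alternating_lin.
rewrite -[_ *: _]addr0; apply: deg1_alternating_lin; last exact: deg1_alternating0.
have /mapP[jj] : family`_i \in family by apply: mem_nth.
by rewrite mem_filter => /andP[jj_ge2 _] ->; apply: deg1_alternating_psi2.
Qed.

Lemma free_psi2 : free family.
Proof.
apply/(@freeP _ _ _ (in_tuple family)) => k k0 i.
have size_idx (j : 'I_(size family)) : (j < size indices)%N by rewrite -(size_map (@psi2 R n)).
have := congr1 (fun psi : cochain R n => psi (X2, nth X2 indices i) 0 X1) k0.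
rewrite /= ffunE mxE sum_ffunE summxE (bigD1 i) //= big1 => [|j j_neq_i].
  rewrite ffunE mxE (nth_map X2 _ _ (size_idx i)) ffunE /= eqxx mxE /=.
  by rewrite mulr1 addr0.
rewrite ffunE mxE (nth_map X2 _ _ (size_idx j)) ffunE /=.
case: ifP => [/eqP nth_eq|_].
  move: j_neq_i; rewrite -(inj_eq val_inj) /= -(nth_uniq X2 (size_idx j) (size_idx i)).
    by rewrite nth_eq eqxx.
  by rewrite filter_uniq // enum_uniq.
case: ifP => [/andP[/eqP nthX2 _]|_]; last by rewrite mxE mulr0.
have := mem_nth X2 (size_idx j); rewrite -nthX2 mem_filter /=; lia.
Qed.

Lemma dim_span_psi2 : \dim <<family>>%VS = (n - 2)%N.
Proof.
rewrite (eqP free_psi2) size_map size_filter.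
rewrite -(count_map val (fun m => 2 <= m)%N) val_enum_ord.
rewrite -{1}(subnKC n_gt1) iotaD count_cat /= (@eq_in_count _ _ predT).
  by rewrite count_predT size_iota.
by move=> m; rewrite mem_iota => /andP[].
Qed.

End Degree1Cochains.

Section Cocycle.
Variables (R : realType) (p : nat) (phi : 'I_p.-1 -> R[i]).
Hypothesis p_ge2 : (2 <= p)%N.
Local Notation n := (2 * p)%N.
Local Notation C := R[i].
Local Notation e1 := (ev R n 0).

Lemma twice_gt1 : (1 < n)%N. Proof. lia. Qed.

Lemma brb_antisym a b : brb phi a b = - brb phi b a.
Proof.
rewrite /brb; case: a => [|[|a]]; case: b => [|[|b]] /=; rewrite ?oppr0 ?opprK //.
all: try (case: eqP => [->|nb]; case: eqP => [|na]; rewrite ?oppr0 ?opprK //; try lia).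
all: try move=> _; rewrite ?andbT ?andbF /=; try case: ifP => _; by rewrite ?oppr0 ?opprK.
Qed.

Lemma brb_coordX2 a b (m : 'I_n) : val m = 1%N -> brb phi a b 0 m = 0.
Proof.
move=> m1; rewrite /brb; case: a => [|[|a]]; case: b => [|[|b]] /=;
  repeat case: ifP => _; rewrite !mxE ?m1 //= ?mxE ?m1 //= ?mulr0 ?oppr0 //.
Qed.

Lemma brb_coord_deg1 a b (m : 'I_n) :
  a != 1%N -> b != 1%N -> val m != 0%N -> brb phi a b 0 m = 0.
Proof.
move=> a_neq1 b_neq1 /negbTE m_neq0; rewrite /brb.
case: a a_neq1 => [|[|a]] //= _; case: b b_neq1 => [|[|b]] //= _;
  repeat case: ifP => _; rewrite ?mxE ?m_neq0 ?oppr0 //.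
Qed.

Lemma adL_scale_e1 (a : nat) (s : C) :
  adL phi a (s *: e1) = (if a == 1%N then - s else 0) *: e1.
Proof.
rewrite /adL (bigD1 (X1 twice_gt1)) //= big1 => [|j j_neq0].
  rewrite !mxE /= mulr1 addr0 (_ : brb phi a 0 = if a == 1%N then - e1 else 0).
    by case: ifP; rewrite ?scaler0 ?scale0r ?scalerN ?scaleNr.
  by case: a => [|[|a]].
rewrite !mxE (_ : (val j == 0%N) = false) ?mulr0 ?scale0r //.
by apply/negbTE; apply: contra j_neq0 => /eqP j0; apply/eqP/val_inj.
Qed.

Section Degree1.
Variable psi : cochain R n.
Hypotheses (psi_alt : alternating psi) (psi_hom : homogeneous 1 psi).
Local Notation f := (psiX1 twice_gt1 psi).

Definition bracket_coord (a b c : 'I_n) : C := \sum_i brb phi a b 0 i * f i c.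

Lemma psiL_deg1 (a b c : 'I_n) : psiL psi (brb phi a b) c = bracket_coord a b c *: e1.
Proof.
rewrite /psiL /bracket_coord scaler_suml.
by apply: eq_bigr => i _; rewrite (deg1_valueE twice_gt1) // scalerA.
Qed.

Lemma bracket_coord_antisym a b c : bracket_coord a b c = - bracket_coord b a c.
Proof. by rewrite -sumrN; apply: eq_bigr => i _; rewrite brb_antisym mxE mulNr. Qed.

Lemma bracket_coord_r (a b c : 'I_n) : val c != 1%N -> bracket_coord a b c = 0.
Proof.
move=> c_neq1; rewrite /bracket_coord big1 // => i _.
have [i1|i_neq1] := eqVneq (val i) 1%N; first by rewrite brb_coordX2 ?mul0r.
by rewrite psiX1_deg2 ?mulr0.
Qed.

Lemma bracket_coord_deg1 (a b c : 'I_n) :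
  val a != 1%N -> val b != 1%N -> bracket_coord a b c = 0.
Proof.
move=> a_neq1 b_neq1; rewrite /bracket_coord big1 // => i _.
have [i0|i_neq0] := eqVneq (val i) 0%N; first by rewrite psiX1_X1l ?mulr0.
by rewrite brb_coord_deg1 ?mul0r.
Qed.

Lemma bracket_coord_X2X2 c : bracket_coord (X2 twice_gt1) (X2 twice_gt1) c = 0.
Proof. by rewrite /bracket_coord big1 // => i _; rewrite mxE mul0r. Qed.

Lemma cocycle_deg1 : cocycle phi psi.
Proof.
move=> a b c; rewrite !(deg1_valueE twice_gt1) // !adL_scale_e1 !psiL_deg1.
rewrite -!scaleNr -!scalerDl; apply/eqP; rewrite scaler_eq0; apply/orP; left; apply/eqP.
have eqX2 z : val z = 1%N -> z = X2 twice_gt1 by move=> z1; apply: val_inj.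
have deg2 := psiX1_deg2 twice_gt1 psi_hom.
have [a1|a_neq1] := eqVneq (val a) 1%N;
have [b1|b_neq1] := eqVneq (val b) 1%N;
have [c1|c_neq1] := eqVneq (val c) 1%N; rewrite ?a1 ?b1 ?c1 /=.
- rewrite (eqX2 a a1) (eqX2 b b1) (eqX2 c c1) psiX1_X2X2 // bracket_coord_X2X2.
  by ring.
- by rewrite (eqX2 a a1) (eqX2 b b1) (bracket_coord_r _ _ c_neq1); ring.
- rewrite (eqX2 a a1) (eqX2 c c1) bracket_coord_X2X2.
  by rewrite (bracket_coord_antisym b) (psiX1_antisym twice_gt1 psi_alt b); ring.
- rewrite (deg2 _ _ b_neq1 c_neq1) (bracket_coord_r _ _ c_neq1).
  by rewrite (bracket_coord_r _ _ b_neq1) (bracket_coord_deg1 _ b_neq1 c_neq1); ring.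
- by rewrite (eqX2 b b1) (eqX2 c c1) (bracket_coord_r _ _ a_neq1); ring.
- rewrite (deg2 _ _ a_neq1 c_neq1) (bracket_coord_r _ _ c_neq1).
  by rewrite (bracket_coord_r _ _ a_neq1) (bracket_coord_deg1 _ a_neq1 c_neq1); ring.
- rewrite (deg2 _ _ a_neq1 b_neq1) (bracket_coord_deg1 _ a_neq1 b_neq1).
  by rewrite (bracket_coord_r _ _ a_neq1) (bracket_coord_r _ _ b_neq1); ring.
- rewrite (bracket_coord_r _ _ a_neq1) (bracket_coord_r _ _ b_neq1).
  by rewrite (bracket_coord_r _ _ c_neq1); ring.
Qed.

End Degree1.
End Cocycle.

Theorem lemma6 (R : realType) (p : nat) (phi : 'I_p.-1 -> R[i]) :
  (2 <= p)%N -> ~ Omega phi ->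
  [/\ (forall psi : cochain R (2 * p), Z2 phi 1 psi <-> psi \in <<psi2_family R (2 * p)>>%VS),
      free (psi2_family R (2 * p))
    & \dim <<psi2_family R (2 * p)>>%VS = (2 * (p - 1))%N].
Proof.
move=> p_ge2 _; have n_gt1 := twice_gt1 p_ge2.
split; last by rewrite dim_span_psi2; lia.
- move=> psi; apply: (iff_trans _ (rwP (span_psi2P n_gt1 psi))).
  split=> [[alt _ hom] //|[alt hom]]; split=> //.
  exact: cocycle_deg1.
- exact: free_psi2.
Qed.
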